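(* Let $V(r)=r\coth r-\log|2\sinh r|$ for $r>0$ and $V_{\mathrm{eff}}(x):=\sum_{k=1}^\infty V(kx)$ for $x>0$. For every $C>0$ there exists $\alpha_0>0$ such that for every $x>0$: if $\sup_{\alpha>\alpha_0}\big[C\,V_{\mathrm{eff}}(\alpha/C)-V(\alpha x)\big]>0$, then $x\ge\frac1{4C}$. *)

From Stdlib Require Import Reals ClassicalEpsilon.
Open Scope R_scope.

Definition coth (r : R) : R := cosh r / sinh r.

Definition V (r : R) : R := r * coth r - ln (Rabs (2 * sinh r)).

(* V_eff(x) = sum_{k>=1} V(k x), as the value of the (convergent for x>0)
   series; chosen by Hilbert's epsilon, which picks the unique limit. *)
Definition Veff (x : R) : R :=
  epsilon (inhabits 0) (fun l => infinite_sum (fun k => V (INR (S k) * x)) l).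

(* For large r, V r is squeezed between exp (-2 r) and 2 exp (-r), so the tail
   C * Veff (alpha / C) is at most 4 C exp (-alpha / C), whereas V (alpha x) is at
   least exp (-2 alpha x).  If x < 1/(4C) then 2 alpha x < alpha / (2C), and for
   alpha large the lower bound on V (alpha x) beats the upper bound on the tail. *)
From Stdlib Require Import Reals Lra ClassicalEpsilon.
Open Scope R_scope.

Lemma exp_mul_INR (n : nat) (y : R) : exp (INR n * y) = exp y ^ n.
Proof.
  induction n as [|n IH].
  - rewrite Rmult_0_l; apply exp_0.
  - rewrite S_INR, Rmult_plus_distr_r, Rmult_1_l, exp_plus, IH; simpl; ring.
Qed.

Lemma ln_le_sub_1 (u : R) : 0 < u -> ln u <= u - 1.
Proof.
  intro hu; destruct (Rle_or_lt (ln u) (u - 1)) as [h|h]; [exact h|].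
  apply exp_increasing in h; rewrite exp_ln in h by exact hu.
  pose proof (exp_ineq1_le (u - 1)); lra.
Qed.

Lemma two_mul_add_1_le_exp (r : R) : 4 <= r -> 2 * r + 1 <= exp r.
Proof.
  intro hr.
  replace r with (r / 2 + r / 2) at 2 by field.
  rewrite exp_plus; pose proof (exp_ineq1_le (r / 2)); nra.
Qed.

Lemma V_closed_form (r : R) : 0 < r ->
  V r = 2 * r * exp (-2 * r) / (1 - exp (-2 * r)) - ln (1 - exp (-2 * r)).
Proof.
  intro hr.
  assert (hexp : 0 < exp r) by apply exp_pos.
  assert (hneg : exp (- r) = exp r * exp (-2 * r)) by (rewrite <- exp_plus; f_equal; ring).
  assert (ht1 : exp (-2 * r) < 1) by (rewrite <- exp_0; apply exp_increasing; lra).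
  assert (ht0 : 0 < exp (-2 * r)) by apply exp_pos.
  assert (h2sinh : 2 * sinh r = exp r * (1 - exp (-2 * r)))
    by (unfold sinh; rewrite hneg; field).
  unfold V, coth.
  rewrite h2sinh, Rabs_right by (apply Rle_ge, Rmult_le_pos; lra).
  rewrite ln_mult, ln_exp by lra.
  replace (sinh r) with (exp r * (1 - exp (-2 * r)) / 2) by lra.
  unfold cosh; rewrite hneg.
  field; split; nra.
Qed.

Lemma V_ge_exp (r : R) : 0 < r -> exp (-2 * r) <= V r.
Proof.
  intro hr; rewrite V_closed_form by exact hr.
  set (t := exp (-2 * r)).
  assert (ht1 : t < 1) by (unfold t; rewrite <- exp_0; apply exp_increasing; lra).
  assert (ht0 : 0 < t) by apply exp_pos.
  assert (0 <= 2 * r * t / (1 - t))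
    by (apply Rmult_le_pos; [nra | left; apply Rinv_0_lt_compat; lra]).
  pose proof (ln_le_sub_1 (1 - t) ltac:(lra)); lra.
Qed.

Lemma V_le_exp (r : R) : 4 <= r -> V r <= 2 * exp (- r).
Proof.
  intro hr; rewrite V_closed_form by lra.
  set (b := exp (- r)).
  assert (hb0 : 0 < b) by apply exp_pos.
  replace (exp (-2 * r)) with (b * b) by (unfold b; rewrite <- exp_plus; f_equal; ring).
  assert (hb1 : (2 * r + 1) * b <= 1).
  { assert (b * exp r = 1) by (unfold b; rewrite <- exp_plus, Rplus_opp_l; apply exp_0).
    pose proof (two_mul_add_1_le_exp r hr); nra. }
  assert (hb9 : b <= 1 / 9) by nra.
  assert (hb2 : b * b < 1) by nra.
  assert (hln : - ln (1 - b * b) <= b * b / (1 - b * b)).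
  { assert (0 < / (1 - b * b)) by (apply Rinv_0_lt_compat; lra).
    rewrite <- ln_Rinv by lra.
    replace (b * b / (1 - b * b)) with (/ (1 - b * b) - 1) by (field; lra).
    apply ln_le_sub_1; assumption. }
  assert (2 * r * (b * b) / (1 - b * b) + b * b / (1 - b * b) <= 2 * b).
  { replace (2 * r * (b * b) / (1 - b * b) + b * b / (1 - b * b))
      with ((2 * r + 1) * b * b / (1 - b * b)) by (field; lra).
    apply (Rmult_le_reg_r (1 - b * b)); [lra|].
    unfold Rdiv; rewrite Rmult_assoc, Rinv_l by lra; nra. }
  lra.
Qed.

Lemma infinite_sum_le_geometric (a : nat -> R) (c q : R) :
  0 <= q < 1 -> (forall k, 0 <= a k <= c * q ^ S k) ->
  exists l, infinite_sum a l /\ l <= c * q / (1 - q).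
Proof.
  intros hq ha.
  assert (hcq : 0 <= c * q) by (pose proof (ha O); simpl in *; lra).
  assert (hpartial : forall n, sum_f_R0 a n <= c * q / (1 - q)).
  { intro n.
    apply Rle_trans with (sum_f_R0 (fun k => q ^ k * (c * q)) n).
    { apply sum_Rle; intros k _.
      replace (q ^ k * (c * q)) with (c * q ^ S k) by (simpl; ring); apply ha. }
    rewrite <- scal_sum, tech3 by lra.
    assert (0 <= q ^ S n) by (apply pow_le; lra).
    assert (0 < / (1 - q)) by (apply Rinv_0_lt_compat; lra).
    unfold Rdiv; apply Rmult_le_compat_l; [exact hcq|]; nra. }
  assert (hgrow : Un_growing (sum_f_R0 a)) by (intro n; simpl; pose proof (ha (S n)); lra).
  assert (hub : has_ub (sum_f_R0 a)) by (exists (c * q / (1 - q)); intros z [n ->]; apply hpartial).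
  destruct (growing_cv _ hgrow hub) as [l hl].
  exists l; split; [exact hl|].
  apply (Rle_cv_lim hpartial hl).
  intros e he; exists O; intros n _; unfold Rdist; rewrite Rminus_diag, Rabs_R0; exact he.
Qed.

Lemma Veff_eq (x l : R) :
  infinite_sum (fun k => V (INR (S k) * x)) l -> Veff x = l.
Proof.
  intro hl; unfold Veff.
  apply (UL_sequence _ _ _ (epsilon_spec (inhabits 0) _ (ex_intro _ l hl)) hl).
Qed.

Lemma Veff_le_exp (y : R) : 4 <= y -> Veff y <= 4 * exp (- y).
Proof.
  intro hy.
  set (q := exp (- y)).
  assert (hq0 : 0 < q) by apply exp_pos.
  assert (hq : q <= 1 / 2).
  { assert (q * exp y = 1) by (unfold q; rewrite <- exp_plus, Rplus_opp_l; apply exp_0).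
    pose proof (exp_ineq1_le y); nra. }
  assert (hterm : forall k, 0 <= V (INR (S k) * y) <= 2 * q ^ S k).
  { intro k.
    assert (1 <= INR (S k)) by (rewrite S_INR; pose proof (pos_INR k); lra).
    split.
    - pose proof (exp_pos (-2 * (INR (S k) * y))).
      pose proof (V_ge_exp (INR (S k) * y) ltac:(nra)); lra.
    - unfold q; rewrite <- exp_mul_INR.
      replace (INR (S k) * - y) with (- (INR (S k) * y)) by ring.
      apply V_le_exp; nra. }
  destruct (infinite_sum_le_geometric _ 2 q ltac:(lra) hterm) as [l [hl hle]].
  rewrite (Veff_eq y l hl).
  apply Rle_trans with (1 := hle).
  apply (Rmult_le_reg_r (1 - q)); [lra|].
  unfold Rdiv; rewrite Rmult_assoc, Rinv_l by lra; nra.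
Qed.

Theorem mainTheorem8 :
  forall C : R, 0 < C ->
  exists alpha0 : R, 0 < alpha0 /\
    forall x : R, 0 < x ->
      (exists alpha : R, alpha0 < alpha /\ C * Veff (alpha / C) - V (alpha * x) > 0) ->
      x >= 1 / (4 * C).
Proof.
  intros C hC; exists (C * (4 + 8 * C)); split; [nra|].
  intros x hx [alpha [halpha hpos]].
  destruct (Rge_or_lt x (1 / (4 * C))) as [h|hsmall]; [exact h|exfalso].
  set (y := alpha / C) in *.
  assert (hy : alpha = C * y) by (unfold y; field; lra).
  assert (hy8 : 4 + 8 * C < y) by nra.
  assert (hCx : 4 * C * x < 1).
  { apply (Rmult_lt_compat_l (4 * C)) in hsmall; [|lra].
    replace (4 * C * (1 / (4 * C))) with 1 in hsmall by (field; lra); exact hsmall. }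
  assert (htail : C * Veff y <= exp (- (y / 2))).
  { assert (hsplit : exp (- (y / 2)) = exp (y / 2) * exp (- y))
      by (rewrite <- exp_plus; f_equal; field).
    pose proof (Veff_le_exp y ltac:(lra)).
    pose proof (exp_ineq1_le (y / 2)); pose proof (exp_pos (- y)); nra. }
  assert (hV : exp (- (y / 2)) < V (alpha * x)).
  { apply Rlt_le_trans with (exp (-2 * (alpha * x))).
    - apply exp_increasing; rewrite hy; nra.
    - apply V_ge_exp; nra. }
  lra.
Qed.
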